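(* Let $(X,\mathscr{R})$ be a closed mixed reaction network with $\mathscr{R}=\mathscr{R}_{\mathrm{rev}}\sqcup\mathscr{R}_{\mathrm{irr}}$ that is thermodynamically sound. Then its reversible completion $(X,\mathscr{R}^* )$ is thermodynamically sound. Moreover, reaction energies $g^*\in\mathbb{R}^{\mathscr{R}^*}$ can be chosen such that both: - $(X,\mathscr{R}^*,g^* )$ is thermodynamic; - $g^*_r<0<g^*_{\bar r}$ for all $r\in\mathscr{R}_{\mathrm{irr}}$.
   Context: A reaction network (RN) $(X,\mathscr{R})$ consists of a finite non-empty set $X$ of species and a finite non-empty set $\mathscr{R}$ of reactions. Each reaction $r$ is given by stoichiometric coefficients $s^-_{xr},s^+_{xr}\in\mathbb{N}_0$. The stoichiometric matrix $S\in\mathbb{Z}^{X\times\mathscr{R}}$ has entries $S_{xr}=s^+_{xr}-s^-_{xr}$. The RN is closed if every reaction $r$ has $x,y$ with $S_{xr}<0<S_{yr}$. The reverse $\bar r$ of $r$ has $s^-_{x\bar r}=s^+_{xr}$ and $s^+_{x\bar r}=s^-_{xr}$. A mixed RN has $\mathscr{R}=\mathscr{R}_{\mathrm{rev}}\sqcup\mathscr{R}_{\mathrm{irr}}$, where $r\in\mathscr{R}_{\mathrm{rev}}$ implies $\bar r\in\mathscr{R}_{\mathrm{rev}}$, and $r\in\mathscr{R}_{\mathrm{irr}}$ implies $\bar r\notin\mathscr{R}$. For an RN with stoichiometric matrix $S$ and $g\in\mathbb{R}^{\mathscr{R}}$, $(X,\mathscr{R},g)$ is thermodynamic if $g\in(\ker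 S)^\perp$. The mixed RN is thermodynamically sound if there is $g$ with $(X,\mathscr{R},g)$ thermodynamic and $g_r<0$ for all $r\in\mathscr{R}_{\mathrm{irr}}$. The reversible completion is $(X,\mathscr{R}^* )$ with $\mathscr{R}^*=\mathscr{R}_{\mathrm{rev}}\sqcup\mathscr{R}_{\mathrm{irr}}\sqcup\{\bar r: r\in\mathscr{R}_{\mathrm{irr}}\}$. As a reversible RN, it is thermodynamically sound if there is $g^*$ with $(X,\mathscr{R}^*,g^* )$ thermodynamic. *)

From mathcomp Require Import all_boot all_order all_algebra.
From mathcomp Require Import reals.
Set Implicit Arguments. Unset Strict Implicit. Unset Printing Implicit Defensive.
Import Order.TTheory GRing.Theory Num.Theory.
Local Open Scope ring_scope.

(* Reactions are identified with their
   coefficient data, so a reaction network is a finite set of such data,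
   represented as a duplicate-free sequence. *)
Definition reaction (X : finType) : Type := ({ffun X -> nat} * {ffun X -> nat})%type.

Definition sminus (X : finType) (r : reaction X) : {ffun X -> nat} := r.1.
Definition splus  (X : finType) (r : reaction X) : {ffun X -> nat} := r.2.

Definition rev_reaction (X : finType) (r : reaction X) : reaction X := (r.2, r.1).

Definition stoich (X : finType) (x : X) (r : reaction X) : int :=
  (splus r x)%:Z - (sminus r x)%:Z.

Definition closed_RN (X : finType) (Rs : seq (reaction X)) : Prop :=
  forall r, r \in Rs -> exists x y : X, (stoich x r < 0)%R /\ (0 < stoich y r)%R.

Definition mixed_RN (X : finType) (Rrev Rirr : seq (reaction X)) : Prop :=
  [/\ uniq (Rrev ++ Rirr),
      forall r, r \in Rrev -> rev_reaction r \in Rrev &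
      forall r, r \in Rirr -> rev_reaction r \notin (Rrev ++ Rirr)].

(* v in ker S  (v : R^R, only entries on Rs matter) *)
Definition in_kerS (K : realType) (X : finType) (Rs : seq (reaction X))
  (v : reaction X -> K) : Prop :=
  forall x : X, \sum_(r <- Rs) (stoich x r)%:~R * v r = 0.

Definition thermodynamic (K : realType) (X : finType) (Rs : seq (reaction X))
  (g : reaction X -> K) : Prop :=
  forall v : reaction X -> K, in_kerS Rs v -> \sum_(r <- Rs) g r * v r = 0.

Definition mixed_thermo_sound (K : realType) (X : finType)
  (Rrev Rirr : seq (reaction X)) : Prop :=
  exists g : reaction X -> K,
    thermodynamic (Rrev ++ Rirr) g /\ (forall r, r \in Rirr -> g r < 0).

Definition rev_completion (X : finType) (Rrev Rirr : seq (reaction X))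
  : seq (reaction X) := Rrev ++ Rirr ++ map (@rev_reaction X) Rirr.

Definition rev_thermo_sound (K : realType) (X : finType) (Rs : seq (reaction X))
  : Prop := exists g : reaction X -> K, thermodynamic Rs g.

From mathcomp Require Import all_boot all_order all_algebra.
From mathcomp Require Import reals.
Set Implicit Arguments. Unset Strict Implicit. Unset Printing Implicit Defensive.
Import Order.TTheory GRing.Theory Num.Theory.
Local Open Scope ring_scope.

(* Extend the energies antisymmetrically, g*(rbar) := - g(r).  A flux v on the
   completion folds back to a flux on the original network by moving the flux of
   rbar onto r with opposite sign; since both S and g* are antisymmetric under
   reversal, this folding preserves S v and g* . v, so thermodynamicity of g
   transfers to g*, and g*(rbar) = - g(r) > 0 for irreversible r. *)

Lemma rev_reactionK (X : finType) : involutive (@rev_reaction X).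
Proof. by case. Qed.

Lemma stoich_rev (X : finType) (x : X) (r : reaction X) :
  stoich x (rev_reaction r) = - stoich x r.
Proof. by rewrite /stoich /splus /sminus /= opprB. Qed.

Section ReversibleCompletion.

Variables (K : realType) (X : finType).
Implicit Types (P Q Rs : seq (reaction X)) (F g v : reaction X -> K).

Definition antisym_ext Rs g (s : reaction X) : K :=
  if s \in Rs then g s else - g (rev_reaction s).

Definition fold_rev Q v (s : reaction X) : K :=
  if s \in Q then v s - v (rev_reaction s) else v s.

Lemma big_fold_rev P Q F v :
  ~~ has (mem P) Q ->
  \sum_(r <- P ++ Q) F r * fold_rev Q v r =
  \sum_(r <- P ++ Q) F r * v r - \sum_(r <- Q) F r * v (rev_reaction r).
Proof.
move=> /hasPn disjPQ; rewrite !big_cat /= -addrA -sumrB.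
congr (_ + _); apply: eq_big_seq => r rP.
  by rewrite /fold_rev ifN //; apply: contraL rP; apply: disjPQ.
by rewrite /fold_rev rP mulrBr.
Qed.

Lemma big_completion_fold P Q F v :
  ~~ has (mem P) Q ->
  {in Q, forall r, F (rev_reaction r) = - F r} ->
  \sum_(r <- P ++ Q ++ map (@rev_reaction X) Q) F r * v r =
  \sum_(r <- P ++ Q) F r * fold_rev Q v r.
Proof.
move=> disjPQ F_rev; rewrite big_fold_rev // catA big_cat big_map /=.
rewrite -sumrN; congr (_ + _); apply: eq_big_seq => r rQ.
by rewrite F_rev // mulNr.
Qed.

Lemma in_kerS_fold_rev P Q v :
  ~~ has (mem P) Q ->
  in_kerS (P ++ Q ++ map (@rev_reaction X) Q) v -> in_kerS (P ++ Q) (fold_rev Q v).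
Proof.
move=> disjPQ kerv x; rewrite -big_completion_fold ?kerv // => r _.
by rewrite stoich_rev intrN.
Qed.

Lemma thermodynamic_antisym_ext P Q g :
  ~~ has (mem P) Q ->
  {in Q, forall r, rev_reaction r \notin P ++ Q} ->
  thermodynamic (P ++ Q) g ->
  thermodynamic (P ++ Q ++ map (@rev_reaction X) Q) (antisym_ext (P ++ Q) g).
Proof.
move=> disjPQ revQ thg v kerv.
rewrite big_completion_fold => [|//|r rQ]; last first.
  by rewrite /antisym_ext ifN ?revQ // rev_reactionK mem_cat rQ orbT.
rewrite -[RHS](thg _ (in_kerS_fold_rev disjPQ kerv)).
by apply: eq_big_seq => r rPQ; rewrite /antisym_ext rPQ.
Qed.

End ReversibleCompletion.

Theorem proposition5 (K : realType) (X : finType) (Rrev Rirr : seq (reaction X)) :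
  (0 < #|X|)%N ->
  Rrev ++ Rirr != [::] ->
  mixed_RN Rrev Rirr ->
  closed_RN (Rrev ++ Rirr) ->
  mixed_thermo_sound K Rrev Rirr ->
  rev_thermo_sound K (rev_completion Rrev Rirr) /\
  exists gs : reaction X -> K,
    thermodynamic (rev_completion Rrev Rirr) gs /\
    (forall r, r \in Rirr -> gs r < 0 /\ 0 < gs (rev_reaction r)).
Proof.
move=> _ _ [uniqR _ revRirr] _ [g [thg gRirr]].
have disjR : ~~ has (mem Rrev) Rirr by move: uniqR; rewrite cat_uniq => /and3P[].
have thgs := thermodynamic_antisym_ext disjR revRirr thg.
split; first by exists (antisym_ext (Rrev ++ Rirr) g).
exists (antisym_ext (Rrev ++ Rirr) g); split=> // r rRirr.
rewrite /antisym_ext mem_cat rRirr orbT ifN ?revRirr // rev_reactionK.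
by rewrite oppr_gt0 gRirr.
Qed.
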